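(* For every $m\ge1$, $0\le s\le m$ and every $j\in\{1,\dots,m\}$, the function $e^{(m-1)\lambda_j}\,\tilde G_s(m,\{\lambda_l\}|\{\xi_k\})$, viewed as a function of $\lambda_j$ with all other variables fixed (generic), is a polynomial in $e^{2\lambda_j}$ of degree at most $m-1$.
   Context: Fix $\zeta\in(0,\pi)$. For integers $m\ge1$, $0\le s\le m$, set $\epsilon_j=-\tfrac12$ for $j\le s$ and $\epsilon_j=+\tfrac12$ for $j>s$ ($\epsilon_j$ attached to $\lambda_j$). Define $$G_s(m,\{\lambda_j\}|\{\xi_k\})=\frac{1}{s!(m-s)!}\sum_{\sigma\in S_m}(-1)^{[\sigma]}\prod_{1\le k<j\le m}\frac{\sinh(\lambda_{\sigma(j)}-\xi_k+i\epsilon_{\sigma(j)}\zeta)\,\sinh(\lambda_{\sigma(k)}-\xi_j-i\epsilon_{\sigma(k)}\zeta)}{\sinh(\lambda_{\sigma(j)}-\lambda_{\sigma(k)}+i(\epsilon_{\sigma(j)}+\epsilon_{\sigma(k)})\zeta)}$$ ($(-1)^{[\sigma]}$ the sign of $\sigma$), and define $\tilde G_s$ by $$G_s(m,\{\lambda_j\}|\{\xi_k\})=\frac{1}{s!(m-s)!}\prod_{1\le k<j\le m}\frac{\sinh(\lambda_j-\lambda_k)}{\sinh(\lambda_j-\lambda_k+i(\epsilon_j+\epsilon_k)\zeta)\,\sinh(\lambda_j-\lambda_k-i(\epsilon_j+\epsilon_k)\zeta)}\;\tilde G_s(m,\{\lambda_j\}|\{\xi_k\}),$$ understood as an identity of meromorphic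 functions (removable singularities extended by continuity). *)

From HB Require Import structures.
From mathcomp Require Import all_boot all_order all_algebra all_fingroup.
From mathcomp Require Import all_classical all_reals all_analysis.
From mathcomp Require Import complex.
Set Implicit Arguments. Unset Strict Implicit. Unset Printing Implicit Defensive.
Import Order.TTheory GRing.Theory Num.Theory.
Local Open Scope ring_scope.
Local Open Scope complex_scope.

Section Defs.
Variable R : realType.
Local Notation C := R[i].

Definition cexp (z : C) : C :=
  (expR (complex.Re z))%:C * ((cos (complex.Im z)) +i* (sin (complex.Im z))).

Definition csinh (z : C) : C := (cexp z - cexp (- z)) / 2.

Definition iR (x : R) : C := (0 +i* x).

(* epsilon_j (0-based index j) : -1/2 if j+1 <= s, +1/2 otherwise *)
Definition eps (s : nat) (m : nat) (j : 'I_m) : R :=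
  if (j < s)%N then - (1/2) else 1/2.

Definition Gs (zeta : R) (m s : nat) (lam xi : 'I_m -> C) : C :=
  ((s`! * (m - s)`!)%:R)^-1 *
  \sum_(sigma : 'S_m) (-1) ^+ (odd_perm sigma) *
    \prod_(k < m) \prod_(j < m | (k < j)%N)
      (csinh (lam (sigma j) - xi k + iR (eps s (sigma j) * zeta)) *
       csinh (lam (sigma k) - xi j - iR (eps s (sigma k) * zeta)) /
       csinh (lam (sigma j) - lam (sigma k)
              + iR ((eps s (sigma j) + eps s (sigma k)) * zeta))).

(* Gtilde_s obtained by solving the defining identity for Gtilde
   (valid where all the sinh factors involved are nonzero) *)
Definition Gtilde (zeta : R) (m s : nat) (lam xi : 'I_m -> C) : C :=
  (s`! * (m - s)`!)%:R * Gs zeta s lam xi *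
  \prod_(k < m) \prod_(j < m | (k < j)%N)
     (csinh (lam j - lam k + iR ((eps s j + eps s k) * zeta)) *
      csinh (lam j - lam k - iR ((eps s j + eps s k) * zeta)) /
      csinh (lam j - lam k)).

(* the points where all denominators (of G_s and of the defining
   identity of Gtilde_s) are nonzero *)
Definition nonsingular (zeta : R) (m s : nat) (lam : 'I_m -> C) : Prop :=
  forall a b : 'I_m, a != b ->
    csinh (lam b - lam a) != 0 /\
    csinh (lam b - lam a + iR ((eps s b + eps s a) * zeta)) != 0.

End Defs.

From HB Require Import structures.
From mathcomp Require Import all_boot all_order all_algebra all_fingroup.
From mathcomp Require Import all_classical all_reals all_analysis.
From mathcomp Require Import complex.
From mathcomp Require Import ring zify.
Set Implicit Arguments.
Unset Strict Implicit.
Unset Printing Implicit Defensive.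
Import Order.TTheory GRing.Theory Num.Theory.
Local Open Scope ring_scope.

(* Clearing the denominators of G_s with the symmetric factor in the definition
   of tilde-G_s gives tilde-G_s = N / V, where V = prod_{k<l} sinh (lam_l - lam_k)
   and N is an alternating sum over permutations of products of sinh's.  As
   functions of z = lam_j, N and V are e^{-2(m-1)z}, resp. e^{-(m-1)z}, times
   polynomials in e^{2z} of degree 2(m-1), resp. m-1.  Both vanish at z = lam_a
   for every a <> j: V because of the factor sinh (lam_a - lam_j), N because
   exchanging lam_a and lam_j flips its sign when eps_a = eps_j, while otherwise
   every term contains sinh (lam_a - lam_j - i (eps_a + eps_j) zeta) = sinh 0.
   Both polynomials are therefore divisible by prod_{a <> j} (X - e^{2 lam_a}),
   which has degree m-1, so the quotient for V is a constant and
   e^{(m-1)z} N / V is a polynomial of degree m-1 in e^{2z}. *)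

Lemma sum_ltn_pairs (m : nat) (f : 'I_m -> nat) :
  (\sum_(k < m) \sum_(l < m | k < l) (f k + f l) = m.-1 * \sum_(k < m) f k)%N.
Proof.
under eq_bigr do rewrite big_split /=.
rewrite big_split /= [X in (_ + X)%N](exchange_big_dep xpredT) //= -big_split big_distrr /=.
apply: eq_bigr => k _.
have -> : m.-1 = #|predC1 k| by rewrite cardC1 card_ord.
rewrite mulnC -iter_addn_0 -big_const [RHS](bigID (fun l : 'I_m => (k < l)%N)) /=.
congr (_ + _); apply: eq_bigl => l; rewrite inE.
  by rewrite andb_idl // -val_eqE => /gtn_eqF ->.
by rewrite -leqNgt ltn_neqAle val_eqE.
Qed.

Section OrderedPairs.
Variable m : nat.

Definition sort2 (a b : 'I_m) : 'I_m * 'I_m := if (a < b)%N then (a, b) else (b, a).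

Lemma sort2C a b : sort2 a b = sort2 b a.
Proof. by rewrite /sort2; case: ltngtP => // /val_inj ->. Qed.

Lemma sort2_map (g : 'I_m -> 'I_m) a b :
  sort2 (g (sort2 a b).1) (g (sort2 a b).2) = sort2 (g a) (g b).
Proof. by rewrite /sort2; case: (a < b)%N => //; apply: (sort2C (g b) (g a)). Qed.

Lemma sort2_ltn a b : ((sort2 a b).1 < (sort2 a b).2)%N = (a != b).
Proof.
by rewrite /sort2 -val_eqE; case: (ltngtP a b) => h //=; rewrite h ?ltnn.
Qed.

Lemma sort2_eq a b : (sort2 a b == (a, b)) = (a <= b)%N.
Proof.
rewrite /sort2; case: (ltngtP a b) => [_|h|/val_inj ->]; rewrite ?eqxx //.
by rewrite xpair_eqE -val_eqE (ltn_eqF h).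
Qed.

Lemma big_ltn_pairs_perm (T : Type) (idx : T) (op : Monoid.com_law idx)
    (f : 'I_m -> 'I_m -> T) (s : 'S_m) :
  (forall a b, f a b = f b a) ->
  \big[op/idx]_(k < m) \big[op/idx]_(l < m | (k < l)%N) f (s k) (s l) =
  \big[op/idx]_(k < m) \big[op/idx]_(l < m | (k < l)%N) f k l.
Proof.
move=> fC; rewrite !pair_big_dep /=.
have f_sort2 a b : f (sort2 a b).1 (sort2 a b).2 = f a b.
  by rewrite /sort2; case: ifP.
pose h (p : 'I_m * 'I_m) := sort2 (s p.1) (s p.2).
pose h' (p : 'I_m * 'I_m) := sort2 ((s^-1)%g p.1) ((s^-1)%g p.2).
symmetry; rewrite (reindex_onto h h') /=; last first.
  by case=> a b /= ab; rewrite /h /h' sort2_map !permKV /sort2 ab.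
apply: eq_big => [[a b] | [a b] _] /=; last by rewrite f_sort2.
rewrite /h /h' sort2_map !permK sort2_ltn (inj_eq perm_inj) sort2_eq.
by rewrite ltn_neqAle val_eqE.
Qed.

End OrderedPairs.

Lemma signed_sum_perm_eq0 (K : numFieldType) (T : finType) (F : {perm T} -> K) (x y : T) :
  x != y -> (forall s, F (s * tperm x y)%g = F s) ->
  \sum_(s : {perm T}) (-1) ^+ odd_perm s * F s = 0.
Proof.
move=> xy Ft; set S := \sum_(s : {perm T}) _.
have SN : S = - S.
  rewrite {1}/S (reindex_inj (mulIg (tperm x y))) /= -sumrN.
  apply: eq_bigr => s _; rewrite Ft odd_permM odd_tperm xy signr_addb /=.
  by rewrite mulrN1 mulNr.
by apply/eqP; rewrite -[_ == _](mulrn_eq0 _ 2) mulr2n {2}SN subrr.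
Qed.

Section ComplexExp.
Variable R : realType.
Local Notation C := R[i].

Lemma cexpD (a b : C) : cexp (a + b) = cexp a * cexp b.
Proof.
case: a => a1 a2; case: b => b1 b2.
rewrite /cexp /= expRD cosD sinD.
by apply/eqP; rewrite eq_complex /=; apply/andP; split; apply/eqP; ring.
Qed.

Lemma cexp0 : cexp (0 : C) = 1.
Proof.
rewrite /cexp /= expR0 cos0 sin0 mul1r.
by apply/eqP; rewrite eq_complex /= !eqxx.
Qed.

Lemma cexpNr (a : C) : cexp (- a) * cexp a = 1.
Proof. by rewrite -cexpD addNr cexp0. Qed.

Lemma cexp_neq0 (a : C) : cexp a != 0.
Proof. by apply: contra_eq_neq (cexpNr a) => ->; rewrite mulr0 eq_sym oner_neq0. Qed.

Lemma cexpN (a : C) : cexp (- a) = (cexp a)^-1.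
Proof. by apply: (mulIf (cexp_neq0 a)); rewrite cexpNr mulVf ?cexp_neq0. Qed.

Lemma cexp_natmul (n : nat) (z : C) : cexp (n%:R * z) = cexp z ^+ n.
Proof.
elim: n => [|n IH]; first by rewrite mul0r cexp0.
by rewrite -addn1 natrD mulrDl mul1r cexpD IH exprD.
Qed.

Lemma csinhN (w : C) : csinh (- w) = - csinh w.
Proof. by rewrite /csinh opprK; field. Qed.

Lemma csinh0 : csinh (0 : C) = 0.
Proof. by rewrite /csinh oppr0 subrr mul0r. Qed.

Lemma iR0 : iR (0 : R) = 0.
Proof. by apply/eqP; rewrite eq_complex /= !eqxx. Qed.

Lemma cexp2B (a b : C) :
  cexp (2 * b) - cexp (2 * a) = 2 * cexp (a + b) * csinh (b - a).
Proof.
have -> : 2 * b = (a + b) + (b - a) by ring.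
have -> : 2 * a = (a + b) + - (b - a) by ring.
by rewrite (cexpD (a + b) (b - a)) (cexpD (a + b) (- (b - a))) /csinh; field.
Qed.

(* [f] is a linear combination of [z |-> e^(kz)], [k = -n, -n+2, ..., n]. *)
Definition exppoly (n : nat) (f : C -> C) : Prop :=
  exists2 p : {poly C}, (size p <= n.+1)%N &
    forall z, f z = cexp (- z) ^+ n * p.[cexp (2 * z)].

Lemma exppoly_ext n (f g : C -> C) : exppoly n f -> f =1 g -> exppoly n g.
Proof. by move=> [p sp fp] fg; exists p => // z; rewrite -fg. Qed.

Lemma exppoly_cst (c : C) : exppoly 0 (fun=> c).
Proof. by exists c%:P => [|z]; rewrite ?size_polyC_leq1 // hornerC mul1r. Qed.

Lemma exppolyZ (a : C) n f : exppoly n f -> exppoly n (fun z => a * f z).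
Proof.
move=> [p sp fp]; exists (a *: p) => [|z]; first exact: leq_trans (size_scale_leq _ _) sp.
by rewrite fp hornerZ mulrCA.
Qed.

Lemma exppolyD n f g : exppoly n f -> exppoly n g -> exppoly n (fun z => f z + g z).
Proof.
move=> [p sp fp] [q sq gq]; exists (p + q) => [|z].
  by apply: leq_trans (size_polyD _ _) _; rewrite geq_max sp sq.
by rewrite fp gq hornerD mulrDr.
Qed.

Lemma exppolyM n1 n2 f g :
  exppoly n1 f -> exppoly n2 g -> exppoly (n1 + n2) (fun z => f z * g z).
Proof.
move=> [p sp fp] [q sq gq]; exists (p * q) => [|z].
  by apply: leq_trans (size_polyMleq _ _) _; rewrite -subn1; lia.
by rewrite fp gq hornerM exprD; ring.
Qed.

Lemma exppoly_sum (I : finType) (P : pred I) n (F : I -> C -> C) :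
  (forall i, P i -> exppoly n (F i)) ->
  exppoly n (fun z => \sum_(i | P i) F i z).
Proof.
move=> hF; elim: (index_enum I) => [|i r IH].
  by exists 0 => [|z]; rewrite ?size_poly0 // big_nil horner0 mulr0.
case: (boolP (P i)) => Pi.
  by apply: exppoly_ext (exppolyD (hF i Pi) IH) _ => z; rewrite big_cons Pi.
by apply: exppoly_ext IH _ => z; rewrite big_cons (negbTE Pi).
Qed.

Lemma exppoly_prod (I : finType) (P : pred I) (w : I -> nat) (F : I -> C -> C) :
  (forall i, P i -> exppoly (w i) (F i)) ->
  exppoly (\sum_(i | P i) w i) (fun z => \prod_(i | P i) F i z).
Proof.
move=> hF; elim: (index_enum I) => [|i r IH].
  by rewrite big_nil; apply: exppoly_ext (exppoly_cst 1) _ => z; rewrite big_nil.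
rewrite big_cons; case: (boolP (P i)) => Pi.
  by apply: exppoly_ext (exppolyM (hF i Pi) IH) _ => z; rewrite big_cons Pi.
by apply: exppoly_ext IH _ => z; rewrite big_cons (negbTE Pi).
Qed.

Lemma exppoly_csinh (c : C) : exppoly 1 (fun z => csinh (z + c)).
Proof.
exists ((cexp c / 2) *: ('X - (cexp (- (2 * c)))%:P)) => [|z].
  by rewrite (leq_trans (size_scale_leq _ _)) // size_XsubC.
have eR : cexp (- z) * cexp c * cexp (2 * z) = cexp (z + c).
  by rewrite -!cexpD; congr cexp; ring.
have eL : cexp (- z) * cexp c * cexp (- (2 * c)) = cexp (- (z + c)).
  by rewrite -!cexpD; congr cexp; ring.
by rewrite hornerZ hornerXsubC expr1 /csinh -eR -eL; field.
Qed.

Lemma exppoly_ratio n (N V : C -> C) (W : seq C) :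
  exppoly (2 * n) N -> exppoly n V -> size W = n ->
  uniq [seq cexp (2 * w) | w <- W] ->
  {in W, forall w, N w = 0} -> {in W, forall w, V w = 0} ->
  exists2 P : {poly C}, (size P <= n.+1)%N &
    forall z, V z != 0 -> cexp (n%:R * z) * (N z / V z) = P.[cexp (2 * z)].
Proof.
move=> [pN sN eN] [pV sV eV] sW uW N0 V0.
set rs := [seq cexp (2 * w) | w <- W].
have roots k f p : (forall z, f z = cexp (- z) ^+ k * p.[cexp (2 * z)]) ->
    {in W, forall w, f w = 0} -> all (root p) rs.
  move=> ep f0; apply/allP => _ /mapP [w Ww ->]; apply/eqP.
  by apply: (mulfI (expf_neq0 k (cexp_neq0 (- w)))); rewrite -ep f0 ?mulr0.
have urs : uniq_roots rs by rewrite uniq_rootsE.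
have [qN eqN] := uniq_roots_prod_XsubC (roots _ _ _ eN N0) urs.
have [qV eqV] := uniq_roots_prod_XsubC (roots _ _ _ eV V0) urs.
set D := \prod_(x <- rs) ('X - x%:P) in eqN eqV.
have sD : size D = n.+1 by rewrite size_prod_XsubC size_map sW.
have size_quo (q : {poly C}) k : (size (q * D)%R <= k + n.+1)%N -> (size q <= k.+1)%N.
  have [->|q0] := eqVneq q 0; first by rewrite size_poly0.
  have D0 : D != 0 by rewrite -size_poly_eq0 sD.
  by rewrite size_mul // sD addnS /= -addSnnS leq_add2r.
have sqN : (size qN <= n.+1)%N by apply: size_quo; rewrite -eqN; lia.
have [c eqc] : exists c, qV = c%:P.
  by exists qV`_0; apply: size1_polyC; apply: size_quo; rewrite -eqV.
exists (c^-1 *: qN) => [|z]; first exact: leq_trans (size_scale_leq _ _) sqN.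
rewrite eN eV eqV eqN eqc !(hornerM, hornerC, hornerZ).
rewrite !mulf_eq0 !negb_or expf_eq0 (negbTE (cexp_neq0 _)) andbF => /and3P [_ c0 D0].
rewrite cexp_natmul cexpN mul2n -addnn exprD !exprVn.
by field; rewrite c0 expf_neq0 ?cexp_neq0.
Qed.

End ComplexExp.

Section GtildeRatio.
Variables (R : realType) (zeta : R) (m s : nat) (j : 'I_m) (lam xi : 'I_m -> R[i]).
Local Notation C := R[i].
Local Notation ε := (eps R s).

Definition lam_at (z : C) (l : 'I_m) : C := if l == j then z else lam l.

Definition numer_term (z : C) (sg : 'S_m) : C :=
  \prod_(k < m) \prod_(l < m | (k < l)%N)
    (csinh (lam_at z (sg l) - xi k + iR (ε (sg l) * zeta)) *
     csinh (lam_at z (sg k) - xi l - iR (ε (sg k) * zeta)) *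
     csinh (lam_at z (sg l) - lam_at z (sg k) - iR ((ε (sg l) + ε (sg k)) * zeta))).

Definition numer (z : C) : C := \sum_(sg : 'S_m) (-1) ^+ odd_perm sg * numer_term z sg.

Definition denom (z : C) : C :=
  \prod_(k < m) \prod_(l < m | (k < l)%N) csinh (lam_at z l - lam_at z k).

(* The symmetric factor of [Gtilde] clears the denominators of every term of [Gs]. *)
Lemma Gtilde_ratio z : nonsingular zeta s (lam_at z) ->
  Gtilde zeta s (lam_at z) xi = numer z / denom z.
Proof.
move=> ns.
pose S a b := csinh (lam_at z b - lam_at z a + iR ((ε b + ε a) * zeta)) *
              csinh (lam_at z b - lam_at z a - iR ((ε b + ε a) * zeta)).
have SC a b : S a b = S b a.
  rewrite /S (addrC (ε a)); set E := iR _.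
  have -> : lam_at z a - lam_at z b + E = - (lam_at z b - lam_at z a - E) by ring.
  have -> : lam_at z a - lam_at z b - E = - (lam_at z b - lam_at z a + E) by ring.
  by rewrite !csinhN mulrNN mulrC.
have fact_neq0 : ((s`! * (m - s)`!)%:R : C) != 0.
  by rewrite pnatr_eq0 muln_eq0 negb_or -!lt0n !fact_gt0.
rewrite /Gtilde /Gs mulrA mulfV // mul1r.
rewrite [X in _ * X](eq_bigr _ (fun k _ => prodf_div _ _ _ _)) prodf_div.
rewrite mulrA /numer mulr_suml; congr (_ / _).
apply: eq_bigr => sg _; rewrite -mulrA; congr (_ * _).
rewrite -(big_ltn_pairs_perm (f := S) _ sg SC) -big_split /=.
apply: eq_bigr => k _; rewrite -big_split /=; apply: eq_bigr => l kl.
have sgkl : sg k != sg l by rewrite (inj_eq perm_inj) -val_eqE (ltn_eqF kl).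
by rewrite /S; field; exact: (ns _ _ sgkl).2.
Qed.

Lemma denom_neq0 z : nonsingular zeta s (lam_at z) -> denom z != 0.
Proof.
move=> ns; apply/prodf_neq0 => k _; apply/prodf_neq0 => l kl.
by apply: (ns k l _).1; rewrite -val_eqE (ltn_eqF kl).
Qed.

Lemma exppoly_csinh_at b c : exppoly (b == j) (fun z => csinh (lam_at z b + c)).
Proof. by rewrite /lam_at; case: (b == j); [exact: exppoly_csinh | exact: exppoly_cst]. Qed.

Lemma exppoly_csinh_diff a b c : a != b ->
  exppoly ((a == j) + (b == j)) (fun z => csinh (lam_at z b - lam_at z a + c)).
Proof.
rewrite /lam_at; case: (eqVneq b j) => [-> /negbTE -> | bj _].
  by apply: exppoly_ext (exppoly_csinh (- lam a + c)) _ => z; rewrite addrA.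
case: (eqVneq a j) => _; last exact: exppoly_cst.
apply: exppoly_ext (exppolyZ (-1) (exppoly_csinh (- lam b - c))) _ => z.
by rewrite mulN1r -csinhN; congr csinh; ring.
Qed.

Lemma exppoly_numer : exppoly (2 * m.-1) numer.
Proof.
apply: exppoly_sum => sg _; apply: exppolyZ.
pose w k := (sg k == j : nat).
have w1 : (\sum_(k < m) w k = 1)%N.
  rewrite (reindex_inj (@perm_inj _ sg^-1)) /w; under eq_bigr do rewrite permKV.
  by rewrite (bigD1 j) //= eqxx big1 // => k /negbTE ->.
have -> : (2 * m.-1 = \sum_(k < m) \sum_(l < m | k < l) (w l + w k + (w k + w l)))%N.
  transitivity (2 * (m.-1 * \sum_(k < m) w k))%N; first by rewrite w1 muln1.
  rewrite -sum_ltn_pairs big_distrr; apply: eq_bigr => k _.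
  by rewrite big_distrr; apply: eq_bigr => l _ /=; lia.
apply: exppoly_prod => k _; apply: exppoly_prod => l kl.
have sgkl : sg k != sg l by rewrite (inj_eq perm_inj) -val_eqE (ltn_eqF kl).
apply: exppoly_ext (exppolyM (exppolyM (exppoly_csinh_at (sg l) (- xi k + _))
  (exppoly_csinh_at (sg k) (- xi l - _))) (exppoly_csinh_diff _ sgkl)) _ => z.
by rewrite !addrA.
Qed.

Lemma exppoly_denom : exppoly m.-1 denom.
Proof.
rewrite -[m.-1]muln1.
have <- : (\sum_(k < m) (k == j : nat) = 1)%N.
  by rewrite (bigD1 j) //= eqxx big1 // => k /negbTE ->.
rewrite -sum_ltn_pairs; apply: exppoly_prod => k _; apply: exppoly_prod => l kl.
apply: exppoly_ext (exppoly_csinh_diff 0 _) _ => [|z]; last by rewrite addr0.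
by rewrite -val_eqE (ltn_eqF kl).
Qed.

Lemma eps_eq_or_opp (a b : 'I_m) : ε a = ε b \/ ε a + ε b = 0.
Proof. by rewrite /eps; case: ifP; case: ifP; rewrite ?addrN ?addNr; by [left | right]. Qed.

Lemma numer_lam : {in map lam (enum (predC1 j)), forall w, numer w = 0}.
Proof.
move=> w /mapP [a]; rewrite mem_enum => aj ->.
have La : lam_at (lam a) a = lam a by rewrite /lam_at (negbTE aj).
have Lj : lam_at (lam a) j = lam a by rewrite /lam_at eqxx.
case: (eps_eq_or_opp a j) => [Eaj | Eaj].
  apply: (signed_sum_perm_eq0 aj) => sg.
  have tpermL b : lam_at (lam a) (tperm a j b) = lam_at (lam a) b.
    by case: tpermP => [->|->|//]; rewrite La Lj.
  have tpermE b : ε (tperm a j b) = ε b by case: tpermP => [->|->|//].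
  by apply: eq_bigr => k _; apply: eq_bigr => l _; rewrite !permM !tpermL !tpermE.
apply: big1 => sg _; apply/eqP; rewrite mulf_eq0; apply/orP; right.
pose p := sort2 ((sg^-1)%g a) ((sg^-1)%g j).
have p12 : (p.1 < p.2)%N by rewrite sort2_ltn (inj_eq perm_inj).
apply/prodf_eq0; exists p.1 => //; apply/prodf_eq0; exists p.2 => //.
rewrite /p /sort2; case: ifP => _ /=; rewrite !permKV La Lj subrr ?Eaj ?(addrC (ε j)) ?Eaj.
all: by rewrite mul0r iR0 subr0 csinh0 mulr0.
Qed.

Lemma denom_lam : {in map lam (enum (predC1 j)), forall w, denom w = 0}.
Proof.
move=> w /mapP [a]; rewrite mem_enum => aj ->.
pose p := sort2 a j.
have p12 : (p.1 < p.2)%N by rewrite sort2_ltn.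
apply/eqP/prodf_eq0; exists p.1 => //; apply/prodf_eq0; exists p.2 => //.
by rewrite /p /sort2; case: ifP => _ /=; rewrite /lam_at (negbTE aj) eqxx subrr csinh0.
Qed.

Lemma uniq_cexp_lam z0 : nonsingular zeta s (lam_at z0) ->
  uniq [seq cexp (2 * w) | w <- map lam (enum (predC1 j))].
Proof.
move=> ns; rewrite -map_comp map_inj_in_uniq ?enum_uniq // => a b.
rewrite !mem_enum !inE => aj bj /eqP; apply: contraTeq => ab.
have := (ns b a (contra_neq esym ab)).1.
rewrite /lam_at (negbTE aj) (negbTE bj) /comp => sab; rewrite -subr_eq0 cexp2B.
apply: mulf_neq0 sab; apply: mulf_neq0 (cexp_neq0 _); by rewrite (pnatr_eq0 C 2).
Qed.

End GtildeRatio.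

Theorem lemma3p2 (R : realType) (zeta : R) (m s : nat) (j : 'I_m)
  (lam xi : 'I_m -> R[i]) :
  0 < zeta < pi -> (1 <= m)%N -> (s <= m)%N ->
  exists P : {poly R[i]},
    (size P <= m)%N /\
    forall z : R[i],
      let lam' := fun l : 'I_m => if l == j then z else lam l in
      nonsingular zeta s lam' ->
      cexp ((m - 1)%:R * z) * Gtilde zeta s lam' xi = P.[cexp (2 * z)].
Proof.
move=> _ m_gt0 _.
have [[z0 ns0] | none] :=
  pselect (exists z0, nonsingular zeta s (lam_at j lam z0)); last first.
  by exists 0; split => [|z /= ns]; [rewrite size_poly0 | case: none; exists z].
have sizeW : size (map lam (enum (predC1 j))) = m.-1.
  by rewrite size_map -cardE cardC1 card_ord.
have [P sizeP HP] := exppoly_ratio (exppoly_numer zeta s j lam xi) (exppoly_denom j lam)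
  sizeW (uniq_cexp_lam ns0) (numer_lam zeta s xi) (@denom_lam _ _ j lam).
exists P; split => [|z /= ns]; first by rewrite (ltn_predK m_gt0) in sizeP.
by rewrite (Gtilde_ratio xi ns) subn1; apply: HP; apply: denom_neq0 ns.
Qed.
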